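(* Let $V$ be a real vector space of dimension $m\ge3$ with a positive definite inner product, and let $R\neq0$ be a Jacobi-Tsankov algebraic curvature tensor on $V$ such that $r(x)<m-1$ for all $x\in V$. Let $x\in S(V)$ with $r(x)\neq0$, and set $W(x)=\mathbb{R}x\oplus\operatorname{Range}(J(x))$. If $w$ is a unit vector in $W(x)$, then: \begin{enumerate} \item $\operatorname{Range}(J(w))\subset W(x)$ and $J(w)$ vanishes on $W(x)^\perp$; \item $J(w)$ is similar to $J(x)$; \item $J(x)$ has exactly two eigenvalues. \end{enumerate}
   Context: An algebraic curvature tensor is $R\in\otimes^4V^*$ satisfying $R(x,y,z,w)=R(z,w,x,y)=-R(y,x,z,w)$ and $R(x,y,z,w)+R(y,z,x,w)+R(z,x,y,w)=0$. The curvature operator $\mathcal{R}(x,y)$ is defined by $\langle\mathcal{R}(x,y)z,w\rangle=R(x,y,z,w)$; the Jacobi operator is $J(x):y\mapsto\mathcal{R}(y,x)x$, and $r(x)=\operatorname{Rank}J(x)$. $S(V)$ is the unit sphere of $V$. $R$ is Jacobi-Tsankov if $x\perp y$ implies $J(x)J(y)=J(y)J(x)$. *)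

From HB Require Import structures.
From mathcomp Require Import all_boot all_order all_algebra.
From mathcomp Require Export mxred.
From mathcomp Require Export reals.
Set Implicit Arguments. Unset Strict Implicit. Unset Printing Implicit Defensive.
Import Order.TTheory GRing.Theory Num.Theory.
Local Open Scope ring_scope.

Definition dot (R : realType) (m : nat) (u v : 'rV[R]_m) : R := (u *m v^T) 0 0.

Definition tensor4 (R : realType) (m : nat) :=
  'rV[R]_m -> 'rV[R]_m -> 'rV[R]_m -> 'rV[R]_m -> R.

Definition multilinear4 (R : realType) (m : nat) (T : tensor4 R m) : Prop :=
  (forall (a : R) u v y z w, T (a *: u + v) y z w = a * T u y z w + T v y z w) /\
  (forall (a : R) x u v z w, T x (a *: u + v) z w = a * T x u z w + T x v z w) /\
  (forall (a : R) x y u v w, T x y (a *: u + v) w = a * T x y u w + T x y v w) /\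
  (forall (a : R) x y z u v, T x y z (a *: u + v) = a * T x y z u + T x y z v).

Definition is_ACT (R : realType) (m : nat) (T : tensor4 R m) : Prop :=
  multilinear4 T /\
  (forall x y z w, T x y z w = T z w x y) /\
  (forall x y z w, T x y z w = - T y x z w) /\
  (forall x y z w, T x y z w + T y z x w + T z x y w = 0).

(* Jacobi operator J(x) : y |-> R(y,x)x, as a matrix acting on row vectors
   (y *m jacobi T x is the vector R(y,x)x, since <R(y,x)x, w> = T y x x w). *)
Definition jacobi (R : realType) (m : nat) (T : tensor4 R m) (x : 'rV[R]_m)
  : 'M[R]_m :=
  \matrix_(i < m, l < m) T (delta_mx 0 i) x x (delta_mx 0 l).

Definition jrank (R : realType) (m : nat) (T : tensor4 R m) (x : 'rV[R]_m) : nat :=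
  \rank (jacobi T x).

Definition jacobi_tsankov (R : realType) (m : nat) (T : tensor4 R m) : Prop :=
  forall x y : 'rV[R]_m, dot x y = 0 ->
    jacobi T x *m jacobi T y = jacobi T y *m jacobi T x.

Definition Wspace (R : realType) (m : nat) (T : tensor4 R m) (x : 'rV[R]_m)
  : 'M[R]_m := (x + jacobi T x)%MS.

(* Write J(z) for the Jacobi operator and J(e,f) : y |-> R(y,e)f + R(y,f)e for its
   polarization.  Polarizing the Jacobi-Tsankov identity J(z)J(q) = J(q)J(z) (z ⊥ q)
   shows that J(e,f) commutes with J(z) when z ⊥ e, f and, at the orthogonal pair
   z + q, |z|^2 q - |q|^2 z, that J(z,q) commutes with |q|^2 J(z) + |z|^2 J(q).
   Consequently p ⊥ q and J(q)p = 0 imply J(p)q = 0, which makes J(w) vanish on W(x)^⊥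
   and map into W(x), and all nonzero eigenvalues of the symmetric operator J(z),
   |z| = 1, coincide: J(x)^2 = λ J(x) with λ ≠ 0.  For a unit w = a x + u in W(x),
   with u in Range J(x), the vector -|u|^2 x + a u is a λ-eigenvector of J(w); hence
   J(w)^2 = λ J(w) and W(w) = W(x), so J(w) and J(x) are λ times projections of the
   same rank. *)

From HB Require Import structures.
From mathcomp Require Import all_boot all_order all_algebra.
From mathcomp Require Import mxred reals.
From mathcomp Require Import ring lra spectral complex.
Set Implicit Arguments. Unset Strict Implicit. Unset Printing Implicit Defensive.
Import Order.TTheory GRing.Theory Num.Theory.
Local Open Scope ring_scope.

Section ScaledIdempotent.
Variables (F : fieldType) (n : nat).
Implicit Types (E M N : 'M[F]_n) (l : F).

Lemma idempotent_similar_pid E : E *m E = E -> similar_in unitmx E (pid_mx (\rank E)).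
Proof.
move=> EE; set r := \rank E; set L := col_ebase E; set U := row_ebase E.
have Lunit : L \in unitmx by apply: col_ebase_unit.
have LU : L *m pid_mx r *m U = E by apply: mulmx_ebase.
(* The first [r] rows of [P] span the row space of [E], the others its kernel. *)
pose P := (pid_mx r : 'M_n) *m U + kermx E.
have rn : (r <= n)%N by apply: rank_leq_row.
have kerE : kermx E = copid_mx r *m invmx L by [].
have pidU : (pid_mx r : 'M_n) *m U = pid_mx r *m invmx L *m E.
  by rewrite -LU !mulmxA mulmxKV // pid_mx_id.
have pidP : (pid_mx r : 'M_n) *m P = pid_mx r *m U.
  by rewrite mulmxDr mulmxA pid_mx_id // kerE mulmxA mul_pid_mx_copid // mul0mx addr0.
have copidP : (copid_mx r : 'M_n) *m P = kermx E.
  by rewrite mulmxDr mulmxA mul_copid_mx_pid // mul0mx add0r kerE mulmxA copid_mx_id.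
have Punit : P \in unitmx.
  rewrite -row_full_unit -sub1mx -(subrK E 1%:M) addrC.
  apply: addmx_sub; first by rewrite -LU -mulmxA -pidP mulmxA submxMl.
  have ker1E : (1%:M - E <= kermx E)%MS.
    by apply/sub_kermxP; rewrite mulmxBl mul1mx EE subrr.
  by apply: submx_trans ker1E _; rewrite -copidP submxMl.
exists P => //; apply/similarP => //.
by rewrite pidP mulmxDl mulmx_ker addr0 pidU -!mulmxA EE.
Qed.

Lemma similar_scaled_idempotent l M N : l != 0 ->
  M *m M = l *: M -> N *m N = l *: N -> \rank M = \rank N -> similar_in unitmx M N.
Proof.
move=> l0 MM NN rMN.
have idem (X : 'M_n) : X *m X = l *: X -> (l^-1 *: X) *m (l^-1 *: X) = l^-1 *: X.
  by move=> XX; rewrite -scalemxAl -scalemxAr XX !scalerA -mulrA mulVf ?mulr1.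
have [P Punit /similarP-/(_ Punit) PM] := idempotent_similar_pid (idem _ MM).
have [Q Qunit /similarP-/(_ Qunit) QN] := idempotent_similar_pid (idem _ NN).
rewrite !mxrank_scale_nz ?invr_eq0 // rMN in PM QN.
have pidE : pid_mx (\rank N) = Q *m (l^-1 *: N) *m invmx Q by rewrite QN mulmxK.
have QPunit : invmx Q *m P \in unitmx by rewrite unitmx_mul unitmx_inv Qunit.
have key : invmx Q *m P *m (l^-1 *: M) = (l^-1 *: N) *m (invmx Q *m P).
  by rewrite -mulmxA PM pidE !mulmxA mulVmx // mul1mx.
exists (invmx Q *m P) => //; apply/similarP => //.
move/(congr1 (fun X => l *: X)): key.
by rewrite -scalemxAr -scalemxAl !scalerA mulfV // !scale1r.
Qed.

Lemma eigenvalue_sqr_scale l M : M *m M = l *: M ->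
  forall c, eigenvalue M c -> c = 0 \/ c = l.
Proof.
move=> MM c /eigenvalueP [v vM v0].
have := congr1 (mulmx v) MM.
rewrite mulmxA vM -scalemxAl vM -scalemxAr vM !scalerA => /eqP.
rewrite -subr_eq0 -scalerBl scaler_eq0 (negbTE v0) orbF -mulrBl mulf_eq0 subr_eq0.
by case/orP => /eqP ->; [right | left].
Qed.

End ScaledIdempotent.

Section RealSymmetric.
Variables (R : rcfType) (n : nat).
Implicit Type M : 'M[R]_n.
Local Notation toC := (real_complex R).

Lemma symmx_spectral M : M^T = M ->
  exists2 P : 'M[R[i]]_n, P \in unitmx &
  exists2 d : 'rV[R]_n, map_mx toC M = invmx P *m diag_mx (map_mx toC d) *m P
    & forall i, eigenvalue M (d 0 i).
Proof.
move=> Msym; set MC := map_mx toC M.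
have MCherm : MC \is hermsymmx.
  apply: realsym_hermsym.
    by apply/is_hermitianmxP; rewrite expr0 scale1r map_mx_id // /MC map_trmx Msym.
  by apply/mxOverP => i j; rewrite mxE; apply/complex_realP; exists (M i j).
have /orthomx_spectralP MCE := hermitian_normalmx MCherm.
have /mxOverP dreal := hermitian_spectral_diag_real MCherm.
set P := spectralmx MC in MCE; set sd := spectral_diag MC in MCE dreal.
have Punit : P \in unitmx by apply: spectral_unit.
have sdE i : toC (complex.Re (sd 0 i)) = sd 0 i.
  by have /complex_realP [r ->] := dreal 0 i.
exists P => //; exists (\row_i complex.Re (sd 0 i)).
  by rewrite {1}MCE; congr (_ *m diag_mx _ *m _); apply/rowP => i; rewrite !mxE sdE.
move=> i; rewrite mxE eigenvalue_root_char -(fmorph_root toC) map_char_poly.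
(* Unfold the coercion of the morphism [toC] so that [sdE] applies. *)
rewrite -eigenvalue_root_char -[eigenvalue _ _]/(eigenvalue MC (toC _)) sdE.
apply/eigenvalueP; exists (row i P).
  by rewrite {1}MCE rowE !mulmxA mulmxK // -[_ *m diag_mx _]rowE row_diag_mx -scalemxAl.
by rewrite rowE mulmx_free_eq0 ?row_free_unit // -mxrank_eq0 mxrank_delta.
Qed.

Lemma symmx_eigenvalue_neq0 M : M^T = M -> M != 0 -> exists2 c, c != 0 & eigenvalue M c.
Proof.
move=> Msym Mnz; have [P Punit [d ME dev]] := symmx_spectral Msym.
have [i di|d0] := pickP (fun i => d 0 i != 0); first by exists (d 0 i).
case/negP: Mnz; rewrite -(map_mx_eq0 toC) ME.
have -> : d = 0 by apply/rowP => i; rewrite mxE; apply/eqP/negbFE/d0.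
by rewrite map_mx0 linear0 mulmx0 mul0mx.
Qed.

Lemma symmx_sqr_eigen M k : M^T = M ->
  (forall c, eigenvalue M c -> c = 0 \/ c = k) -> M *m M = k *: M.
Proof.
move=> Msym Mev; have [P Punit [d ME dev]] := symmx_spectral Msym.
set D := diag_mx (map_mx toC d) in ME.
have DD : D *m D = toC k *: D.
  apply/matrixP => i j; rewrite mul_diag_mx !mxE.
  by case: (Mev _ (dev i)) => ->; rewrite ?rmorph0 ?mul0rn ?mulr0.
apply: (map_mx_inj (f := toC)); rewrite map_mxM map_mxZ ME !mulmxA mulmxK //.
by rewrite -(mulmxA _ D D) DD -scalemxAr -scalemxAl.
Qed.

End RealSymmetric.

Section InnerProduct.
Variables (R : realType) (m : nat).
Implicit Types (u v w : 'rV[R]_m) (A B : 'M[R]_m).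

Lemma dotC u v : dot u v = dot v u.
Proof. by rewrite /dot -[u *m _]trmxK [in LHS]mxE trmx_mul trmxK. Qed.

Lemma dotDl u v w : dot (u + v) w = dot u w + dot v w.
Proof. by rewrite /dot mulmxDl mxE. Qed.

Lemma dotZl a u w : dot (a *: u) w = a * dot u w.
Proof. by rewrite /dot -scalemxAl mxE. Qed.

Lemma dotNl u w : dot (- u) w = - dot u w.
Proof. by rewrite /dot mulNmx mxE. Qed.

Lemma dotBl u v w : dot (u - v) w = dot u w - dot v w.
Proof. by rewrite dotDl dotNl. Qed.

Lemma dot0l w : dot 0 w = 0.
Proof. by rewrite /dot mul0mx mxE. Qed.

Lemma dotDr u v w : dot w (u + v) = dot w u + dot w v.
Proof. by rewrite !(dotC w) dotDl. Qed.

Lemma dotZr a u w : dot w (a *: u) = a * dot w u.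
Proof. by rewrite !(dotC w) dotZl. Qed.

Lemma dotNr u w : dot w (- u) = - dot w u.
Proof. by rewrite !(dotC w) dotNl. Qed.

Lemma dotBr u v w : dot w (u - v) = dot w u - dot w v.
Proof. by rewrite !(dotC w) dotBl. Qed.

Lemma dot0r w : dot w 0 = 0.
Proof. by rewrite dotC dot0l. Qed.

Lemma dotE u v : dot u v = \sum_i u 0 i * v 0 i.
Proof. by rewrite /dot mxE; apply: eq_bigr => i _; rewrite mxE. Qed.

Lemma dot_ge0 u : 0 <= dot u u.
Proof. by rewrite dotE sumr_ge0 // => i _; rewrite -expr2 sqr_ge0. Qed.

Lemma dot_eq0 u : (dot u u == 0) = (u == 0).
Proof.
apply/idP/eqP => [|->]; last by rewrite dot0l.
rewrite dotE psumr_eq0 => [/allP u0|i _]; last by rewrite -expr2 sqr_ge0.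
apply/rowP => i; rewrite mxE; apply/eqP.
by have := u0 i (mem_index_enum _); rewrite mulf_eq0 orbb.
Qed.

Lemma dot_gt0 u : u != 0 -> 0 < dot u u.
Proof. by move=> u0; rewrite lt_def dot_eq0 u0 dot_ge0. Qed.

Lemma dot_mulmx_tr u A v : dot (u *m A) v = dot u (v *m A^T).
Proof. by rewrite /dot trmx_mul trmxK mulmxA. Qed.

Lemma dot_delta u i : dot u (delta_mx 0 i) = u 0 i.
Proof. by rewrite /dot trmx_delta -colE mxE. Qed.

Lemma row_dot_ext u v : (forall w, dot u w = dot v w) -> u = v.
Proof. by move=> uv; apply/rowP => i; rewrite -!dot_delta uv. Qed.

Lemma row_dot_eq0 u : (forall w, dot u w = 0) -> u = 0.
Proof. by move=> u0; apply: row_dot_ext => w; rewrite u0 dot0l. Qed.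

Lemma mx_dot_ext A B : (forall y w, dot (y *m A) w = dot (y *m B) w) -> A = B.
Proof. by move=> AB; apply/row_matrixP => i; rewrite !rowE; apply: row_dot_ext. Qed.

End InnerProduct.

Section LinearFunctional.
Variables (R : realType) (m : nat) (f : 'rV[R]_m -> R).
Hypothesis f_lin : forall a u v, f (a *: u + v) = a * f u + f v.

Lemma linear_fun0 : f 0 = 0.
Proof.
have := f_lin 1 0 0; rewrite scaler0 addr0 mul1r => f00.
by apply: (addrI (f 0)); rewrite addr0 -f00.
Qed.

Lemma linear_funD u v : f (u + v) = f u + f v.
Proof. by have := f_lin 1 u v; rewrite scale1r mul1r. Qed.

Lemma linear_funZ a u : f (a *: u) = a * f u.
Proof. by rewrite -[a *: u]addr0 f_lin linear_fun0 addr0. Qed.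

Lemma linear_row_sum u : f u = \sum_i u 0 i * f (delta_mx 0 i).
Proof.
rewrite {1}(row_sum_delta u); elim/big_rec2: _ => [|i s1 s2 _ <-].
  exact: linear_fun0.
exact: f_lin.
Qed.

End LinearFunctional.

Section CurvatureTensor.
Variables (R : realType) (m : nat) (T : tensor4 R m).
Hypothesis hT : is_ACT T.
Implicit Types (a b c d e f u v w y z : 'rV[R]_m).
Local Notation J := (jacobi T).

Let T_lin1 b c d k u v : T (k *: u + v) b c d = k * T u b c d + T v b c d.
Proof. by case: hT => [[lin _] _]; apply: lin. Qed.

Let T_lin2 a c d k u v : T a (k *: u + v) c d = k * T a u c d + T a v c d.
Proof. by case: hT => [[_ [lin _]] _]; apply: lin. Qed.

Let T_lin3 a b d k u v : T a b (k *: u + v) d = k * T a b u d + T a b v d.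
Proof. by case: hT => [[_ [_ [lin _]]] _]; apply: lin. Qed.

Let T_lin4 a b c k u v : T a b c (k *: u + v) = k * T a b c u + T a b c v.
Proof. by case: hT => [[_ [_ [_ lin]]] _]; apply: lin. Qed.

Let T_pair a b c d : T a b c d = T c d a b.
Proof. by case: hT => [_ [pair _]]; apply: pair. Qed.

Let T_antisym a b c d : T a b c d = - T b a c d.
Proof. by case: hT => [_ [_ [anti _]]]; apply: anti. Qed.

Let T_antisym34 a b c d : T a b c d = - T a b d c.
Proof. by rewrite T_pair T_antisym T_pair. Qed.

Let T_rev a b c d : T a b c d = T d c b a.
Proof. by rewrite T_pair T_antisym T_antisym34 opprK. Qed.

(* [y *m curvmx b c] is the vector R(y,b)c; in particular [J z = curvmx z z]. *)
Definition curvmx b c : 'M[R]_m := \matrix_(i, l) T (delta_mx 0 i) b c (delta_mx 0 l).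

Lemma dot_curvmx y b c w : dot (y *m curvmx b c) w = T y b c w.
Proof.
have -> : y *m curvmx b c = \row_l T y b c (delta_mx 0 l).
  apply/rowP => l; rewrite !mxE (linear_row_sum (T_lin1 b c _)).
  by apply: eq_bigr => i _; rewrite mxE.
by rewrite dotE (linear_row_sum (T_lin4 y b c) w); apply: eq_bigr => i _; rewrite mxE mulrC.
Qed.

Lemma curvmxDl u v c : curvmx (u + v) c = curvmx u c + curvmx v c.
Proof. by apply/matrixP => i l; rewrite !mxE (linear_funD (T_lin2 _ c _)). Qed.

Lemma curvmxZl k u c : curvmx (k *: u) c = k *: curvmx u c.
Proof. by apply/matrixP => i l; rewrite !mxE (linear_funZ (T_lin2 _ c _)). Qed.

Lemma curvmxDr u v b : curvmx b (u + v) = curvmx b u + curvmx b v.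
Proof. by apply/matrixP => i l; rewrite !mxE (linear_funD (T_lin3 _ b _)). Qed.

Lemma curvmxZr k u b : curvmx b (k *: u) = k *: curvmx b u.
Proof. by apply/matrixP => i l; rewrite !mxE (linear_funZ (T_lin3 _ b _)). Qed.

Lemma jacobi_sym z : (J z)^T = J z.
Proof. by apply/matrixP => i j; rewrite !mxE T_pair T_antisym T_antisym34 opprK. Qed.

Lemma dot_jacobi_sym u z v : dot (u *m J z) v = dot u (v *m J z).
Proof. by rewrite dot_mulmx_tr jacobi_sym. Qed.

Lemma mul_curvmx_self y c : y *m curvmx y c = 0.
Proof.
apply: row_dot_eq0 => w; rewrite dot_curvmx.
by have := T_antisym y y c w; lra.
Qed.

Lemma mul_curvmx_swap y b c : y *m curvmx b c = - (b *m curvmx y c).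
Proof.
apply/eqP; rewrite -addr_eq0; apply/eqP/row_dot_eq0 => w.
by rewrite dotDl !dot_curvmx T_antisym addNr.
Qed.

Lemma dot_curvmx_pair y b c d : dot (y *m curvmx b c) d = dot (c *m curvmx d y) b.
Proof. by rewrite !dot_curvmx T_pair. Qed.

Lemma jacobiE z : J z = curvmx z z.
Proof. by []. Qed.

(* [y *m jpol e f] is R(y,e)f + R(y,f)e, twice the polarized Jacobi operator J(e,f)y. *)
Definition jpol e f := curvmx e f + curvmx f e.

Lemma jpol_sym e f : (jpol e f)^T = jpol e f.
Proof. by apply/matrixP => i j; rewrite !mxE addrC T_rev [T _ f e _]T_rev. Qed.

Lemma jacobiD e f : J (e + f) = J e + jpol e f + J f.
Proof. by rewrite !jacobiE curvmxDl !curvmxDr !addrA. Qed.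

Lemma jacobiZ k z : J (k *: z) = k ^+ 2 *: J z.
Proof. by rewrite !jacobiE curvmxZl curvmxZr scalerA expr2. Qed.

Lemma jpolZl k e f : jpol (k *: e) f = k *: jpol e f.
Proof. by rewrite /jpol curvmxZl curvmxZr scalerDr. Qed.

Lemma mul_jacobi_self z : z *m J z = 0.
Proof. exact: mul_curvmx_self. Qed.

Lemma mul_jpol_self e f : e *m jpol e f = - (f *m J e).
Proof. by rewrite mulmxDr mul_curvmx_self add0r mul_curvmx_swap. Qed.

Lemma dot_jpol_diag z e f : dot (z *m jpol e f) z = dot (e *m J z) f *+ 2.
Proof.
rewrite mulmxDr dotDl (dot_curvmx_pair z e) (dot_curvmx_pair z f).
by rewrite dot_jacobi_sym [dot (f *m _) e]dotC mulr2n.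
Qed.

Lemma jpolC e f : jpol e f = jpol f e.
Proof. exact: addrC. Qed.

Lemma dot_jpol_sym u e f v : dot (u *m jpol e f) v = dot u (v *m jpol e f).
Proof. by rewrite dot_mulmx_tr jpol_sym. Qed.

Lemma mul_jacobi_sqr_eq0 u z : u *m J z *m J z = 0 -> u *m J z = 0.
Proof. by move=> uJJ; apply/eqP; rewrite -dot_eq0 dot_jacobi_sym uJJ dot0r. Qed.

Lemma jacobi_eigen_orth z u k : u *m J z = k *: u -> k != 0 -> dot u z = 0.
Proof.
move=> uJz k0; have := dot_jacobi_sym u z z; rewrite uJz mul_jacobi_self dot0r dotZl.
by move/eqP; rewrite mulf_eq0 (negbTE k0) => /eqP.
Qed.

Hypothesis hJT : jacobi_tsankov T.

Lemma jacobi_jpol_commute z e f : dot z e = 0 -> dot z f = 0 ->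
  J z *m jpol e f = jpol e f *m J z.
Proof.
move=> ze zf; have zef : dot z (e + f) = 0 by rewrite dotDr ze zf addr0.
have -> : jpol e f = J (e + f) - J e - J f 
  by apply/eqP; rewrite eq_sym !subr_eq jacobiD (addrC (J e)) addrAC.
by rewrite !mulmxBr !mulmxBl (hJT ze) (hJT zf) (hJT zef).
Qed.

Lemma jpol_commute_jacobi_sum z q : dot z q = 0 -> dot z z + dot q q != 0 ->
  jpol z q *m (dot q q *: J z + dot z z *: J q) =
  (dot q q *: J z + dot z z *: J q) *m jpol z q.
Proof.
move=> zq nz; set K := _ + _; apply: mx_dot_ext => y w.
pose b := dot z z *: q + (- dot q q) *: z.
have zqb : dot (z + q) b = 0.
  by rewrite dotDl !dotDr !dotZr (dotC q z) zq; ring.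
have E0 := congr1 (fun M => dot (y *m M) w) (hJT zqb).
have E1 := congr1 (fun M => dot (y *m M) w) (hJT zq).
have H : dot (y *m (J (z + q) *m J b)) w - dot (y *m (J b *m J (z + q))) w =
    (dot z z + dot q q) * (dot (y *m (jpol z q *m K)) w - dot (y *m (K *m jpol z q)) w)
    + (dot z z ^+ 2 - dot q q ^+ 2) *
      (dot (y *m (J z *m J q)) w - dot (y *m (J q *m J z)) w).
  rewrite /K /b /jpol; rewrite ?(jacobiE, curvmxDl, curvmxDr, curvmxZl, curvmxZr,
    mulmxDl, mulmxDr, mulmxA, =^~ scalemxAl, =^~ scalemxAr, dotDl, dotZl).
  by ring.
move: H; rewrite /= in E0 E1; rewrite E0 E1 !subrr mulr0 addr0 => /esym/eqP.
by rewrite mulf_eq0 (negbTE nz) subr_eq0 => /eqP.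
Qed.

Lemma jacobi_ker_sym p q : dot p q = 0 -> p *m J q = 0 -> q *m J p = 0.
Proof.
move=> pq pJq; have [->|q0] := eqVneq q 0; first by rewrite mul0mx.
have nz : dot p p + dot q q != 0 by rewrite gt_eqF // ltr_wpDl ?dot_ge0 ?dot_gt0.
have pK : p *m (dot q q *: J p + dot p p *: J q) = 0.
  by rewrite mulmxDr -!scalemxAr mul_jacobi_self pJq !scaler0 addr0.
have := congr1 (mulmx p) (jpol_commute_jacobi_sum pq nz).
rewrite !mulmxA pK mul0mx mul_jpol_self mulNmx mulmxDr -!scalemxAr.
rewrite -(mulmxA q (J p) (J q)) (hJT pq) mulmxA mul_jacobi_self mul0mx scaler0 addr0 => /eqP.
rewrite oppr_eq0 scaler_eq0 dot_eq0 (negbTE q0) /= => /eqP.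
exact: mul_jacobi_sqr_eq0.
Qed.

Lemma jacobi_eigen_swap z u k : dot z z = 1 -> u *m J z = k *: u -> k != 0 ->
  z *m J u = (k * dot u u) *: z.
Proof.
move=> z1 uJz k0; have uz := jacobi_eigen_orth uJz k0.
have zu : dot z u = 0 by rewrite dotC.
have nz : dot z z + dot u u != 0 by rewrite z1 gt_eqF // ltr_pwDl ?dot_ge0.
set g := z *m J u; set c := k * dot u u.
have gJz : g *m J z = 0 by rewrite -mulmxA -(hJT zu) mulmxA mul_jacobi_self mul0mx.
have gJu : g *m J u = c *: g.
  have uK : u *m (dot u u *: J z + dot z z *: J u) = c *: u.
    by rewrite mulmxDr -!scalemxAr uJz mul_jacobi_self scaler0 addr0 scalerA mulrC.
  have gK : g *m (dot u u *: J z + dot z z *: J u) = g *m J u.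
    by rewrite mulmxDr -!scalemxAr gJz scaler0 add0r z1 scale1r.
  have := congr1 (mulmx u) (jpol_commute_jacobi_sum zu nz).
  rewrite !mulmxA jpolC mul_jpol_self -/g mulNmx gK uK -scalemxAl mul_jpol_self.
  by rewrite scalerN => /oppr_inj.
have gz : dot g z = c by rewrite /g dot_curvmx_pair -jacobiE uJz dotZl.
have gg : dot g g = c * c by rewrite {1}/g dot_jacobi_sym gJu dotZr dotC gz.
apply/eqP; rewrite -subr_eq0 -dot_eq0; apply/eqP.
by rewrite !(dotBl, dotBr, dotZl, dotZr) gg gz (dotC z g) gz z1; ring.
Qed.

Lemma jacobi_eigen_ker z u k v : u *m J z = k *: u -> k != 0 ->
  dot v z = 0 -> v *m J z = 0 -> v *m J u = 0.
Proof.
move=> uJz k0 vz vJz; have uz := jacobi_eigen_orth uJz k0.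
have zu : dot z u = 0 by rewrite dotC.
have zv : dot z v = 0 by rewrite dotC.
have := congr1 (mulmx u) (jacobi_jpol_commute zu zv).
rewrite !mulmxA uJz -scalemxAl mul_jpol_self mulNmx -(mulmxA v) (hJT uz) mulmxA vJz.
by rewrite mul0mx oppr0 => /eqP; rewrite scalerN oppr_eq0 scaler_eq0 (negbTE k0) => /eqP.
Qed.

Lemma jacobi_norm_swap z q : dot z z = 1 -> dot z q = 0 ->
  dot (z *m J q) (z *m J q) = dot q q * dot (q *m J z) (q *m J z).
Proof.
move=> z1 zq; have qz : dot q z = 0 by rewrite dotC.
have nz : dot z z + dot q q != 0 by rewrite z1 gt_eqF // ltr_pwDl ?dot_ge0.
set g := z *m J q; set h := q *m J z.
have qK : q *m (dot q q *: J z + dot z z *: J q) = dot q q *: h.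
  by rewrite mulmxDr -!scalemxAr mul_jacobi_self scaler0 addr0.
have gK : g *m (dot q q *: J z + dot z z *: J q) = g *m J q.
  rewrite mulmxDr -!scalemxAr -mulmxA -(hJT zq) mulmxA mul_jacobi_self mul0mx.
  by rewrite scaler0 add0r z1 scale1r.
have := congr1 (fun M => dot (q *m M) z) (jpol_commute_jacobi_sum zq nz).
rewrite /= !mulmxA qK jpolC mul_jpol_self -/g mulNmx gK -scalemxAl dotNl dotZl.
by rewrite dot_jacobi_sym dot_jpol_sym jpolC mul_jpol_self -/h dotNr mulrN => /oppr_inj.
Qed.

Lemma jpol_eigen_eq0 z e f k l : dot z z = 1 ->
  e *m J z = k *: e -> f *m J z = l *: f -> k != 0 -> l != 0 -> dot e f = 0 ->
  z *m jpol e f = 0.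
Proof.
move=> z1 eJz fJz k0 l0 ef; set h := z *m jpol e f.
have ez := jacobi_eigen_orth eJz k0; have fz := jacobi_eigen_orth fJz l0.
have [ze zf] : dot z e = 0 /\ dot z f = 0 by rewrite !(dotC z).
have hz : dot h z = 0 by rewrite dot_jpol_diag eJz dotZl ef mulr0 mul0rn.
have hJz : h *m J z = 0.
  by rewrite -mulmxA -(jacobi_jpol_commute ze zf) mulmxA mul_jacobi_self mul0mx.
have he : dot h e = 0.
  by rewrite dot_jpol_sym mul_jpol_self dotNr -dot_jacobi_sym (jacobi_eigen_swap z1 eJz k0)
    dotZl zf mulr0 oppr0.
have hf : dot h f = 0.
  by rewrite dot_jpol_sym jpolC mul_jpol_self dotNr -dot_jacobi_sym
    (jacobi_eigen_swap z1 fJz l0) dotZl ze mulr0 oppr0.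
have eJh : e *m J h = 0 by apply: jacobi_ker_sym (jacobi_eigen_ker eJz k0 hz hJz).
have fJh : f *m J h = 0 by apply: jacobi_ker_sym (jacobi_eigen_ker fJz l0 hz hJz).
have hJef : h *m J (e + f) = 0.
  by apply: jacobi_ker_sym; rewrite ?mulmxDl ?eJh ?fJh ?addr0 // dotDl !(dotC _ h) he hf addr0.
have hpol : h *m jpol e f = 0.
  move: hJef; rewrite jacobiD !mulmxDr (jacobi_eigen_ker eJz k0 hz hJz).
  by rewrite (jacobi_eigen_ker fJz l0 hz hJz) add0r addr0.
by apply/eqP; rewrite -dot_eq0 {2}/h -dot_jpol_sym hpol dot0l.
Qed.

Lemma jacobi_eigenvalue_uniq z e f k l : dot z z = 1 ->
  e *m J z = k *: e -> f *m J z = l *: f -> e != 0 -> f != 0 -> k != 0 -> l != 0 ->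
  k = l.
Proof.
move=> z1 eJz fJz e0 f0 k0 l0; apply/eqP/negP => /negP kl.
have ez := jacobi_eigen_orth eJz k0; have fz := jacobi_eigen_orth fJz l0.
have ef : dot e f = 0.
  have : k * dot e f = l * dot e f by rewrite -dotZl -eJz dot_jacobi_sym fJz dotZr.
  by move/eqP; rewrite -subr_eq0 -mulrBl mulf_eq0 subr_eq0 (negbTE kl) => /eqP.
have zef : dot z (e + f) = 0 by rewrite dotDr !(dotC z) ez fz addr0.
have := jacobi_norm_swap z1 zef.
rewrite jacobiD 2!mulmxDr (jacobi_eigen_swap z1 eJz k0) (jacobi_eigen_swap z1 fJz l0).
rewrite (jpol_eigen_eq0 z1 eJz fJz k0 l0 ef) addr0 !mulmxDl eJz fJz.
rewrite !(dotDl, dotDr, dotZl, dotZr) z1 (dotC f e) ef => H.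
(* [H] is the equality case of Cauchy-Schwarz for (|e|, |f|) and (k|e|, l|f|). *)
have : dot e e * dot f f * (k - l) ^+ 2 = 0 by lra.
by move/eqP; rewrite !mulf_eq0 subr_eq0 (negbTE kl) !dot_eq0 (negbTE e0) (negbTE f0).
Qed.

Lemma jacobi_sqr z e k : dot z z = 1 -> e *m J z = k *: e -> e != 0 -> k != 0 ->
  J z *m J z = k *: J z.
Proof.
move=> z1 eJz e0 k0; apply: symmx_sqr_eigen (jacobi_sym z) _ => c /eigenvalueP [v vJz v0].
have [->|c0] := eqVneq c 0; [by left | right].
exact: jacobi_eigenvalue_uniq z1 vJz eJz v0 e0 c0 k0.
Qed.

Lemma Wspace_decomp z w : (w <= Wspace T z)%MS -> exists (a : R) y, w = a *: z + y *m J z.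
Proof.
case/sub_addsmxP => [[u1 u2] /= ->]; exists (u1 0 0), u2.
by rewrite {1}[u1]mx11_scalar mul_scalar_mx.
Qed.

Lemma mem_Wspace_self z : (z <= Wspace T z)%MS.
Proof. exact: addsmxSl. Qed.

Lemma mulmx_jacobi_sub_Wspace z y : (y *m J z <= Wspace T z)%MS.
Proof. exact: submx_trans (submxMl _ _) (addsmxSr _ _). Qed.

Lemma rank_Wspace z : dot z z = 1 -> \rank (Wspace T z) = (\rank (J z)).+1.
Proof.
move=> z1; have z0 : z != 0 by rewrite -dot_eq0 z1 oner_eq0.
rewrite /Wspace mxrank_disjoint_sum ?rank_rV ?z0 //; apply/eqP; rewrite -submx0.
apply/row_subP => i; rewrite submx0; apply/eqP; set r := row i _.
have /sub_rVP [c rz] : (r <= z)%MS by apply: submx_trans (row_sub _ _) (capmxSl _ _).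
have /submxP [y rJ] : (r <= J z)%MS by apply: submx_trans (row_sub _ _) (capmxSr _ _).
have := congr1 (fun v => dot v z) rJ.
rewrite /= dot_jacobi_sym mul_jacobi_self dot0r rz dotZl z1 mulr1 => c0.
by rewrite c0 scale0r.
Qed.

Section Wspace.
Variables (x : 'rV[R]_m) (l : R).
Hypotheses (x1 : dot x x = 1) (l0 : l != 0) (Jx2 : J x *m J x = l *: J x).

Lemma mulmx_jacobi_eigen y : y *m J x *m J x = l *: (y *m J x).
Proof. by rewrite -mulmxA Jx2 scalemxAr. Qed.

Lemma Wspace_perp_ker w v : (w <= Wspace T x)%MS -> dot v x = 0 -> v *m J x = 0 ->
  v *m J w = 0.
Proof.
case/Wspace_decomp => a [y ->] vx vJx; set u := y *m J x.
have uJx : u *m J x = l *: u := mulmx_jacobi_eigen y.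
have vu : dot v u = 0 by rewrite dotC dot_jacobi_sym vJx dot0r.
have uJv := jacobi_ker_sym vu (jacobi_eigen_ker uJx l0 vx vJx).
apply: jacobi_ker_sym; first by rewrite dotDl dotZl !(dotC _ v) vx vu mulr0 addr0.
by rewrite mulmxDl -scalemxAl (jacobi_ker_sym vx vJx) uJv scaler0 addr0.
Qed.

Lemma jacobi_sub_Wspace w : (w <= Wspace T x)%MS -> (J w <= Wspace T x)%MS.
Proof.
move=> wW; apply/row_subP => i; rewrite rowE; set g := delta_mx 0 i *m J w.
(* [r] is the component of [g] orthogonal to W(x). *)
set r := g - dot g x *: x - l^-1 *: (g *m J x).
have rx : dot r x = 0.
  by rewrite !(dotBl, dotZl) x1 mulr1 dot_jacobi_sym mul_jacobi_self dot0r mulr0 !subrr.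
have rJx : r *m J x = 0.
  rewrite !mulmxBl -!scalemxAl mul_jacobi_self scaler0 subr0 mulmx_jacobi_eigen.
  by rewrite scalerA mulVf // scale1r subrr.
have rJw := Wspace_perp_ker wW rx rJx.
have rr : dot r r = 0.
  rewrite {2}/r !(dotBr, dotZr) rx -dot_jacobi_sym rJx dot0l /g.
  by rewrite -dot_jacobi_sym rJw dot0l !mulr0 !subr0.
have gE : g = dot g x *: x + (l^-1 *: g) *m J x.
  by move/eqP: rr; rewrite dot_eq0 -scalemxAl subr_eq0 subr_eq addrC => /eqP.
by rewrite gE addmx_sub_adds ?submxMl ?scalemx_sub ?submx_refl.
Qed.

Lemma Wspace_unit_decomp w : (w <= Wspace T x)%MS -> dot w w = 1 ->
  exists (a : R) u, [/\ w = a *: x + u, u *m J x = l *: u, dot u x = 0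
                      & a ^+ 2 + dot u u = 1].
Proof.
case/Wspace_decomp => a [y ->] w1; exists a, (y *m J x).
have uJx := mulmx_jacobi_eigen y; have ux := jacobi_eigen_orth uJx l0.
split => //; move: w1; rewrite !(dotDl, dotDr, dotZl, dotZr) x1 ux (dotC x) ux.
by rewrite !mulr0 addr0 add0r mulr1 expr2.
Qed.

(* [-|u|^2 x + a u] is [w = a x + u] turned by a right angle in the plane of x and u. *)
Lemma jacobi_eigen_rot (a : R) u : u *m J x = l *: u -> dot u x = 0 -> a ^+ 2 + dot u u = 1 ->
  ((- dot u u) *: x + a *: u) *m J (a *: x + u) = l *: ((- dot u u) *: x + a *: u).
Proof.
move=> uJx ux a2; have xJu := jacobi_eigen_swap x1 uJx l0.
have xpol : x *m jpol x u = - (l *: u) by rewrite mul_jpol_self uJx.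
have upol : u *m jpol x u = - ((l * dot u u) *: x) by rewrite jpolC mul_jpol_self xJu.
rewrite jacobiD jacobiZ jpolZl !mulmxDr !mulmxDl -!scalemxAr -!scalemxAl.
rewrite mul_jacobi_self (mul_jacobi_self u) xpol upol xJu uJx.
apply: row_dot_ext => t; rewrite !(dotDl, dotZl, dotNl, dot0l).
have -> : dot u u = 1 - a ^+ 2 by rewrite -a2 addrAC subrr add0r.
by ring.
Qed.

Lemma Wspace_unit_jacobi_sqr w : (w <= Wspace T x)%MS -> dot w w = 1 ->
  J w *m J w = l *: J w.
Proof.
move=> wW w1; have [a [u [wE uJx ux a2]]] := Wspace_unit_decomp wW w1.
have [u0|u0] := eqVneq u 0.
  have a21 : a ^+ 2 = 1 by move: a2; rewrite u0 dot0l addr0.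
  by rewrite wE u0 addr0 jacobiZ a21 scale1r.
rewrite wE in w1 *; apply: jacobi_sqr w1 (jacobi_eigen_rot uJx ux a2) _ l0.
rewrite -dot_eq0; have -> : dot ((- dot u u) *: x + a *: u) ((- dot u u) *: x + a *: u) =
    dot u u * (a ^+ 2 + dot u u).
  by rewrite !(dotDl, dotDr, dotZl, dotZr) x1 ux (dotC x u) ux; ring.
by rewrite a2 mulr1 dot_eq0.
Qed.

Lemma mem_Wspace_unit w : (w <= Wspace T x)%MS -> dot w w = 1 -> (x <= Wspace T w)%MS.
Proof.
move=> wW w1; have [a [u [wE uJx ux a2]]] := Wspace_unit_decomp wW w1.
set w' := (- dot u u) *: x + a *: u.
have xE : x = a *: w + (- l^-1 *: w') *m J w.
  rewrite -scalemxAl wE (jacobi_eigen_rot uJx ux a2) scalerA mulNr mulVf // scaleN1r.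
  apply: row_dot_ext => t; rewrite !(dotDl, dotZl, dotNl) -[LHS]mul1r -a2; ring.
by rewrite {1}xE addmx_sub_adds ?submxMl ?scalemx_sub ?submx_refl.
Qed.

End Wspace.

Lemma Wspace_unit_similar x l w : dot x x = 1 -> l != 0 -> J x *m J x = l *: J x ->
  (w <= Wspace T x)%MS -> dot w w = 1 -> similar_in unitmx (J w) (J x).
Proof.
move=> x1 l0 Jx2 wW w1; have Jw2 := Wspace_unit_jacobi_sqr x1 l0 Jx2 wW w1.
have eqW : (Wspace T w == Wspace T x)%MS.
  rewrite /eqmx !addsmx_sub wW (jacobi_sub_Wspace x1 l0 Jx2 wW).
  have xW := mem_Wspace_unit x1 l0 Jx2 wW w1.
  by rewrite xW (jacobi_sub_Wspace w1 l0 Jw2 xW).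
have /eqP := eqmx_rank eqW; rewrite !rank_Wspace // eqSS => /eqP rk.
exact: similar_scaled_idempotent l0 Jw2 Jx2 rk.
Qed.

End CurvatureTensor.

Theorem lemma2p3 (R : realType) (m : nat) (T : tensor4 R m) (x w : 'rV[R]_m) :
  (3 <= m)%N ->
  is_ACT T ->
  jacobi_tsankov T ->
  (exists y z u v, T y z u v != 0) ->
  (forall y : 'rV[R]_m, (jrank T y < m.-1)%N) ->
  dot x x = 1 ->
  jrank T x != 0%N ->
  (w <= Wspace T x)%MS -> dot w w = 1 ->
  [/\ (jacobi T w <= Wspace T x)%MS
      /\ (forall v : 'rV[R]_m,
            (forall u : 'rV[R]_m, (u <= Wspace T x)%MS -> dot v u = 0) ->
            v *m jacobi T w = 0),
      similar_in unitmx (jacobi T w) (jacobi T x)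
    & exists a b : R, [/\ a != b, eigenvalue (jacobi T x) a,
        eigenvalue (jacobi T x) b &
        forall c : R, eigenvalue (jacobi T x) c -> c = a \/ c = b]].
Proof.
move=> _ hT hJT _ _ x1 rx wW w1.
have Jx0 : jacobi T x != 0 by rewrite -mxrank_eq0.
have [l l0 /eigenvalueP [e eJx e0]] := symmx_eigenvalue_neq0 (jacobi_sym hT x) Jx0.
have Jx2 := jacobi_sqr hT hJT x1 eJx e0 l0.
have x0 : x != 0 by rewrite -dot_eq0 x1 oner_eq0.
split; [split | |].
- exact: (jacobi_sub_Wspace hT hJT x1 l0 Jx2 wW).
- move=> v vW; apply: (Wspace_perp_ker hT hJT l0 Jx2 wW).
    exact: vW (mem_Wspace_self T x).
  apply: row_dot_eq0 => t; rewrite (dot_jacobi_sym hT).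
  exact: vW (mulmx_jacobi_sub_Wspace T x t).
- exact: (Wspace_unit_similar hT hJT x1 l0 Jx2 wW w1).
- exists 0, l; split; first by rewrite eq_sym.
  + by apply/eigenvalueP; exists x => //; rewrite (mul_jacobi_self hT) scale0r.
  + by apply/eigenvalueP; exists e.
  + exact: (eigenvalue_sqr_scale Jx2).
Qed.
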